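(* Let $L$ be a finite-dimensional non-nilpotent Lie algebra over a field $F$, and suppose $U$ is a nonzero proper strongly self-centralizing subalgebra of $L$. Then: (1) $\mathrm{nil}_L(x)=U$ for all $0\neq x\in U$; (2) $\Gamma_{\mathfrak{N}}(L)$ is disconnected; (3) if $F$ is finite, then $|N(L)|-1\le\omega(\Gamma_{\mathfrak{N}}(L))$.
   Context: A subalgebra $U$ of $L$ is strongly self-centralizing if $C_L(x)=U$ for all $0\neq x\in U$, where $C_L(x)=\{y\in L\mid [x,y]=0\}$. $\langle a,b\rangle$ denotes the Lie subalgebra generated by $a,b$; $\mathrm{nil}_L(h)=\{x\in L\mid \langle h,x\rangle \text{ is nilpotent}\}$ and $\mathrm{nil}(L)=\{x\in L\mid \langle h,x\rangle \text{ is nilpotent for all } h\in L\}$. The nilpotent graph $\Gamma_{\mathfrak{N}}(L)$ is the simple undirected graph with vertex set $L\setminus\mathrm{nil}(L)$ in which distinct vertices $x,y$ are adjacent iff $\langle x,y\rangle$ is nilpotent. $\omega(\Gamma)$ is the clique number of $\Gamma$, and $N(L)$ is the nilradical (largest nilpotent ideal) of $L$. *)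

From HB Require Import structures.
From mathcomp Require Import all_boot all_order all_algebra.
Set Implicit Arguments. Unset Strict Implicit. Unset Printing Implicit Defensive.
Import GRing.Theory.
Local Open Scope ring_scope.

Record lie_bracket (F : fieldType) (L : vectType F) := LieBracket {
  br : L -> L -> L;
  br_linl : forall (a : F) (x y z : L), br (a *: x + y) z = a *: br x z + br y z;
  br_linr : forall (a : F) (x y z : L), br z (a *: x + y) = a *: br z x + br z y;
  br_alt : forall x : L, br x x = 0;
  br_jacobi : forall x y z : L,
    br x (br y z) + br y (br z x) + br z (br x y) = 0
}.

Section Lie.
Variables (F : fieldType) (L : vectType F) (B : lie_bracket L).
Local Notation "[ x , y ]" := (br B x y).

Definition lset := L -> Prop.

Definition is_subalg (U : {vspace L}) : Prop :=
  forall x y, x \in U -> y \in U -> [x, y] \in U.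

Definition is_ideal (U : {vspace L}) : Prop :=
  forall x y, y \in U -> [x, y] \in U.

Definition lspan (A : lset) : lset :=
  fun x => forall V : {vspace L}, (forall y, A y -> y \in V) -> x \in V.

Definition gen2 (a b : L) : lset :=
  fun x => forall S : {vspace L}, is_subalg S -> a \in S -> b \in S -> x \in S.

Fixpoint lcs (A : lset) (k : nat) : lset :=
  match k with
  | 0 => A
  | k'.+1 => lspan (fun z => exists x y, A x /\ lcs A k' y /\ z = [x, y])
  end.

Definition nilpotent (A : lset) : Prop :=
  exists k, forall x, lcs A k x -> x = 0.

Definition vset (U : {vspace L}) : lset := fun x => x \in U.

Definition lie_nilpotent : Prop := nilpotent (fun _ => True).

Definition centralizer (x : L) : lset := fun y => [x, y] = 0.

Definition strongly_self_centralizing (U : {vspace L}) : Prop :=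
  forall x, x \in U -> x != 0 -> forall y, centralizer x y <-> y \in U.

Definition nil_L (h : L) : lset := fun x => nilpotent (gen2 h x).

Definition nil_all : lset := fun x => forall h, nilpotent (gen2 h x).

Definition ngraph_vertex (x : L) : Prop := ~ nil_all x.

Definition ngraph_adj (x y : L) : Prop :=
  [/\ ngraph_vertex x, ngraph_vertex y, x <> y & nilpotent (gen2 x y)].

Inductive ngraph_reach (x : L) : L -> Prop :=
  | reach_refl : ngraph_vertex x -> ngraph_reach x x
  | reach_step : forall y z, ngraph_reach x y -> ngraph_adj y z -> ngraph_reach x z.

Definition ngraph_connected : Prop :=
  forall x y, ngraph_vertex x -> ngraph_vertex y -> ngraph_reach x y.

Definition ngraph_disconnected : Prop := ~ ngraph_connected.

Definition ngraph_clique (s : seq L) : Prop :=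
  uniq s /\ (forall x, x \in s -> ngraph_vertex x) /\
  (forall x y, x \in s -> y \in s -> x != y -> ngraph_adj x y).

Definition is_clique_number (n : nat) : Prop :=
  (exists s, ngraph_clique s /\ size s = n) /\
  (forall s, ngraph_clique s -> (size s <= n)%N).

Definition is_nilradical (I : {vspace L}) : Prop :=
  [/\ is_ideal I, nilpotent (vset I) &
      forall J : {vspace L}, is_ideal J -> nilpotent (vset J) -> (J <= I)%VS].

Definition nilradical : lset := fun x => exists I, is_nilradical I /\ x \in I.

End Lie.

Definition is_card (T : eqType) (A : T -> Prop) (m : nat) : Prop :=
  exists s : seq T, [/\ uniq s, size s = m & forall x, x \in s <-> A x].

Definition finite_type (T : eqType) : Prop := exists s : seq T, forall x, x \in s.

From mathcomp Require Import all_boot all_order all_algebra.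
From Stdlib Require Import Classical.
Set Implicit Arguments. Unset Strict Implicit. Unset Printing Implicit Defensive.
Import GRing.Theory.
Local Open Scope ring_scope.

(* A strongly self-centralizing U is abelian, so <x, y> is abelian, hence
   nilpotent, for x, y in U. Conversely, if <x, y> is nilpotent with x <> 0,
   the last nonzero term of its lower central series contains some z <> 0
   commuting with x and y; then z lies in C_L(x) = U and y in C_L(z) = U. As U is proper, nil(L) = 0, the vertices
   of the nilpotent graph are the nonzero vectors, and U \ {0} is a union of
   connected components missing the vectors outside U. Finally any two
   elements of N(L) generate a subalgebra of the nilpotent ideal N(L), so the
   nonzero elements of N(L) form a clique. *)

Section LieAlgebra.
Variables (F : fieldType) (L : vectType F) (B : lie_bracket L).
Local Notation "[ x , y ]" := (br B x y).

Lemma brDl (x y z : L) : [x + y, z] = [x, z] + [y, z].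
Proof. by have := br_linl B 1 x y z; rewrite !scale1r. Qed.

Lemma brDr (x y z : L) : [z, x + y] = [z, x] + [z, y].
Proof. by have := br_linr B 1 x y z; rewrite !scale1r. Qed.

Lemma br0l (z : L) : [0, z] = 0.
Proof. by apply: (@addIr _ [0, z]); rewrite -brDl !add0r. Qed.

Lemma br0r (z : L) : [z, 0] = 0.
Proof. by apply: (@addIr _ [z, 0]); rewrite -brDr !add0r. Qed.

Lemma brZl a (x z : L) : [a *: x, z] = a *: [x, z].
Proof. by have := br_linl B a x 0 z; rewrite addr0 br0l addr0. Qed.

Lemma brZr a (x z : L) : [z, a *: x] = a *: [z, x].
Proof. by have := br_linr B a x 0 z; rewrite addr0 br0r addr0. Qed.

Lemma br_anti (y z : L) : [y, z] = - [z, y].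
Proof.
have := br_alt B (y + z).
rewrite brDl !brDr !br_alt add0r addr0 => /eqP.
by rewrite addr_eq0 => /eqP.
Qed.

Lemma ideal_subalg (I : {vspace L}) : is_ideal B I -> is_subalg B I.
Proof. by move=> hI x y _; apply: hI. Qed.

Lemma lcs_sub (A A' : lset L) : (forall v, A v -> A' v) ->
  forall k v, lcs B A k v -> lcs B A' k v.
Proof.
move=> sAA'; elim=> [|k IHk] v /=; first exact: sAA'.
move=> Av V sV; apply: Av => _ [a [b [Aa [Ab ->]]]].
by apply: sV; exists a, b; split; [apply: sAA' | split; [apply: IHk|]].
Qed.

Lemma nilpotent_sub (A A' : lset L) : (forall v, A v -> A' v) ->
  nilpotent B A' -> nilpotent B A.
Proof. by move=> sAA' [k hk]; exists k => v /(lcs_sub sAA') /hk. Qed.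

Lemma gen2C a b v : gen2 B a b v -> gen2 B b a v.
Proof. by move=> h S hS hb ha; apply: h. Qed.

Lemma gen2_sub (S : {vspace L}) a b v : is_subalg B S -> a \in S -> b \in S ->
  gen2 B a b v -> v \in S.
Proof. by move=> hS ha hb; apply. Qed.

Lemma nilpotent_gen2_abelian (S : {vspace L}) a b : is_subalg B S ->
  {in S &, forall u w, [u, w] = 0} -> a \in S -> b \in S ->
  nilpotent B (gen2 B a b).
Proof.
move=> hS abS aS bS; exists 1%N => v /= hv; apply/eqP; rewrite -memv0.
apply: hv => _ [u [w [hu [hw ->]]]].
by rewrite abS ?mem0v //; apply: (gen2_sub hS aS bS).
Qed.

Lemma nil_all0 : nil_all B 0.
Proof.
have ab_line h : {in <[h]>%VS &, forall u w, [u, w] = 0}.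
  by move=> u w /vlineP[a ->] /vlineP[b ->]; rewrite brZl brZr br_alt !scaler0.
move=> h; have ab_h := ab_line h.
apply: (nilpotent_gen2_abelian _ ab_h) (memv_line h) (mem0v _).
by move=> u w hu hw; rewrite ab_h ?mem0v.
Qed.

Lemma nilpotent_gen2_ideal (I : {vspace L}) x y : is_ideal B I ->
  nilpotent B (vset I) -> x \in I -> y \in I -> nilpotent B (gen2 B x y).
Proof.
move=> hI nI xI yI; apply: nilpotent_sub nI => v.
exact: gen2_sub (ideal_subalg hI) xI yI.
Qed.

Lemma nilradical_gen2_nilpotent x y :
  nilradical B x -> nilradical B y -> nilpotent B (gen2 B x y).
Proof.
move=> [I [[hI nI _] xI]] [J [[hJ nJ maxJ] yJ]].
apply: (nilpotent_gen2_ideal hJ nJ _ yJ).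
exact: subvP (maxJ I hI nI) _ xI.
Qed.

(* The last nonzero term of the lower central series of <x, y> is
   centralized by x and y, which lie in <x, y> itself. *)
Lemma nilpotent_gen2_center x y : x != 0 -> nilpotent B (gen2 B x y) ->
  exists2 z, z != 0 & [x, z] = 0 /\ [y, z] = 0.
Proof.
move=> x0 [k hk]; set N := gen2 B x y.
have Nx : N x by move=> S _ h _.
have Ny : N y by move=> S _ _ h.
suff [j [z [Njz z0 Nj1]]] : exists j z, [/\ lcs B N j z, z != 0 &
    forall v, lcs B N j.+1 v -> v = 0].
  exists z => //; split; apply: Nj1 => V sV; apply: sV.
    by exists x, z.
  by exists y, z.
elim: k hk => [|k IHk] hk; first by move: x0; rewrite (hk x Nx) eqxx.
case: (classic (forall v, lcs B N k v -> v = 0)); first exact: IHk.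
move=> /not_all_ex_not[z Nkz_neq0].
have [Nkz z0] := imply_to_and _ _ Nkz_neq0.
by exists k, z; split=> //; apply/eqP.
Qed.

Section StronglySelfCentralizing.
Variable U : {vspace L}.
Hypotheses (U_subalg : is_subalg B U) (U_neq0 : (U != 0)%VS)
  (U_proper : U != fullv) (U_ssc : strongly_self_centralizing B U).

Lemma ssc_abelian : {in U &, forall u w, [u, w] = 0}.
Proof.
move=> u w uU wU; have [->|u0] := eqVneq u 0; first exact: br0l.
exact/(U_ssc uU u0 w).
Qed.

Lemma nil_L_ssc x : x \in U -> x != 0 -> forall y, nil_L B x y <-> y \in U.
Proof.
move=> xU x0 y; split; last exact: nilpotent_gen2_abelian U_subalg ssc_abelian xU.
move=> /(nilpotent_gen2_center x0) [z z0 [xz yz]].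
have zU : z \in U by apply/(U_ssc xU x0 z).
by apply/(U_ssc zU z0 y); rewrite /centralizer br_anti yz oppr0.
Qed.

Lemma nil_all_ssc x : nil_all B x -> x = 0.
Proof.
have uU := memv_pick U; have u0 : vpick U != 0 by rewrite vpick0.
move=> nx; apply/eqP; apply: contraNT U_proper => x0.
have xU : x \in U by apply/(nil_L_ssc uU u0); apply: nx.
rewrite eqEsubv subvf; apply/subvP => v _.
by apply/(nil_L_ssc xU x0); apply: nilpotent_sub (nx v); apply: gen2C.
Qed.

Lemma ngraph_vertex_ssc x : ngraph_vertex B x <-> x != 0.
Proof.
split; first by apply: contraPneq => ->; apply; apply: nil_all0.
by move=> x0 /nil_all_ssc x_eq0; rewrite x_eq0 eqxx in x0.
Qed.

Lemma ngraph_reach_ssc x y : x \in U -> ngraph_reach B x y -> y \in U.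
Proof.
move=> xU; elim=> // a b _ aU [va _ _ ab].
exact/(nil_L_ssc aU (proj1 (ngraph_vertex_ssc a) va)).
Qed.

Lemma ngraph_disconnected_ssc : ngraph_disconnected B.
Proof.
have /subvPn [w _ wU] : ~~ (fullv <= U)%VS.
  by apply: contra U_proper => sfU; rewrite eqEsubv subvf.
have w0 : w != 0 by apply: contraNneq wU => ->; apply: mem0v.
have u0 : vpick U != 0 by rewrite vpick0.
move=> conn; have := conn _ _ (proj2 (ngraph_vertex_ssc _) u0)
  (proj2 (ngraph_vertex_ssc _) w0).
by move/(ngraph_reach_ssc (memv_pick U)); rewrite (negbTE wU).
Qed.

Lemma ngraph_clique_nilradical s : uniq s -> (forall x, x \in s -> nilradical B x) ->
  ngraph_clique B (rem 0 s).
Proof.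
move=> us sN; have vs x : x \in rem 0 s -> ngraph_vertex B x.
  by rewrite mem_rem_uniq // => /andP[x0 _]; apply/ngraph_vertex_ssc.
split; [exact: rem_uniq | split=> // x y xs ys xy].
split; [exact: vs | exact: vs | exact/eqP |].
by apply: nilradical_gen2_nilpotent; apply: sN; [move: xs | move: ys];
  rewrite mem_rem_uniq // => /andP[].
Qed.

Lemma nilradical_card_le_clique_number m n :
  is_card (nilradical B) m -> is_clique_number B n -> (m - 1 <= n)%N.
Proof.
move=> [s [us <- sN]] [_ max_n].
apply: leq_trans (max_n _ (ngraph_clique_nilradical us (fun x => (sN x).1))).
have [s0|s0] := boolP (0 \in s); first by rewrite size_rem // subn1.
by rewrite rem_id // leq_subr.
Qed.

End StronglySelfCentralizing.

End LieAlgebra.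

Theorem theorem6p6 (F : fieldType) (L : vectType F) (B : lie_bracket L)
  (U : {vspace L}) :
  ~ lie_nilpotent B ->
  is_subalg B U -> (U != 0)%VS -> U != fullv ->
  strongly_self_centralizing B U ->
  [/\ (forall x, x \in U -> x != 0 -> forall y, nil_L B x y <-> y \in U),
      ngraph_disconnected B &
      (finite_type F -> forall m n : nat,
         is_card (nilradical B) m -> is_clique_number B n -> (m - 1 <= n)%N)].
Proof.
move=> _ U_subalg U_neq0 U_proper U_ssc; split.
- exact: nil_L_ssc.
- exact: (ngraph_disconnected_ssc U_subalg).
- by move=> _ m n; apply: (nilradical_card_le_clique_number U_subalg).
Qed.
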